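(* Let $[\mathcal{F}],[\mathcal{E}]$ be two $\mathrm{PGL}(4)$-classes of tetrahedra of flags that are $(\sigma,\tau)$-glueable, and let $\mathcal{G}=\{[(\mathcal{F}',\mathcal{E}')]\in\mathcal{FL}_{\sigma,\tau}:\mathcal{F}'\in[\mathcal{F}],\ \mathcal{E}'\in[\mathcal{E}]\}$. Then the gluing parameter $g_\sigma^\tau$ restricted to $\mathcal{G}$ is a homeomorphism $\mathcal{G}\to\mathbb{R}^\times$.
   Context: Flags: $(V,\eta)$ with $\eta$ a plane of $\mathbb{RP}^3$ through $V$. Tetrahedron of flags: non-degenerate ($\eta_i(V_j)=0\iff i=j$) ordered quadruple $(V_m,\eta_m)_{m=1}^4$, $V_m$ not coplanar, with some projective tetrahedron with vertices $V_m$ whose interior misses all $\eta_m$. Edge-faces $\sigma=(ij)k$ are even permutations $[ijkl]$ of $\{1,2,3,4\}$. $\mathcal{F}=(V_m,\eta_m)$ and $\mathcal{E}=(W_m,\zeta_m)$ are glued along $(\sigma,\tau)$, $\sigma=(ij)k$ ($=[ijkl]$), $\tau=(i'j')k'$ ($=[i'j'k'l']$), if $(V_i,\eta_i)=(W_{j'},\zeta_{j'})$, $(V_j,\eta_j)=(W_{i'},\zeta_{i'})$, $(V_k,\eta_k)=(W_{k'},\zeta_{k'})$; classes are $(\sigma,\tau)$-glueable if they have such representatives. $\mathrm{FL}_{\sigma,\tau}$ is the set of pairs glued along $(\sigma,\tau)$ and $\mathcal{FL}_{\sigma,\tau}$ its quotient by diagonal $\mathrm{PGL}(4)$ (quotient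 topology). The gluing parameter of $(\mathcal{F},\mathcal{E})\in\mathrm{FL}_{\sigma,\tau}$ is $g^{\mathcal{E},\tau}_{\mathcal{F},\sigma}=-\frac{\bar\eta_i(\bar V_l)\,\bar\eta_j(\bar V_k)\,\bar\eta_{ijk}(\bar W_{l'})}{\bar\eta_i(\bar V_k)\,\bar\eta_j(\bar W_{l'})\,\bar\eta_{ijk}(\bar V_l)}$, where $\eta_{ijk}$ is the plane spanned by $V_i,V_j,V_k$ and bars denote representatives in $\mathbb{R}^4$, $(\mathbb{R}^4)^*$; it is $\mathrm{PGL}(4)$-invariant and defines $g_\sigma^\tau:\mathcal{FL}_{\sigma,\tau}\to\mathbb{R}^\times$. *)

From Stdlib Require Import Reals ClassicalEpsilon.
Open Scope R_scope.

Inductive I4 : Type := i1 | i2 | i3 | i4.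

Definition I4_eq_dec (a b : I4) : {a = b} + {a <> b}.
Proof. decide equality. Defined.

(** Vectors of R^4 and covectors (elements of (R^4)^* ), both as I4 -> R. *)
Definition vec := I4 -> R.

Definition sum4 (f : I4 -> R) : R := f i1 + f i2 + f i3 + f i4.

Definition ev (eta v : vec) : R := sum4 (fun k => eta k * v k).

Definition nonzero (v : vec) : Prop := exists k, v k <> 0.

Definition proj_eq (v w : vec) : Prop :=
  exists c : R, c <> 0 /\ forall k, v k = c * w k.

Definition det3_234 (x y z : vec) : R :=
  x i2 * (y i3 * z i4 - y i4 * z i3)
  - y i2 * (x i3 * z i4 - x i4 * z i3)
  + z i2 * (x i3 * y i4 - x i4 * y i3).

Definition det4 (a b c d : vec) : R :=
  a i1 * det3_234 b c d - b i1 * det3_234 a c d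
  + c i1 * det3_234 a b d - d i1 * det3_234 a b c.

Definition mat := I4 -> I4 -> R.
Definition mat_mul (A B : mat) : mat := fun r c => sum4 (fun k => A r k * B k c).
Definition id_mat : mat := fun r c => if I4_eq_dec r c then 1 else 0.
Definition inverse_pair (A B : mat) : Prop :=
  (forall r c, mat_mul A B r c = id_mat r c) /\ (forall r c, mat_mul B A r c = id_mat r c).
(** Action on vectors: v |-> A v ; action on covectors: eta |-> eta o A^{-1} = eta B. *)
Definition act_vec (A : mat) (v : vec) : vec := fun r => sum4 (fun c => A r c * v c).
Definition act_cov (eta : vec) (B : mat) : vec := fun c => sum4 (fun r => eta r * B r c).

(** A representative of an ordered quadruple of flags (V_m, eta_m). *)
Definition tetrep := ((I4 -> vec) * (I4 -> vec))%type.
Definition tV (T : tetrep) : I4 -> vec := fst T.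
Definition tEta (T : tetrep) : I4 -> vec := snd T.

Definition is_tet_flags (T : tetrep) : Prop :=
  (forall m, nonzero (tV T m)) /\ (forall m, nonzero (tEta T m)) /\
  (* non-degenerate: eta_i(V_j) = 0 iff i = j (in particular each (V_m,eta_m) is a flag) *)
  (forall i j, ev (tEta T i) (tV T j) = 0 <-> i = j) /\
  det4 (tV T i1) (tV T i2) (tV T i3) (tV T i4) <> 0 /\
  (* some projective tetrahedron with vertices V_m (choice of signs s_m), whose
     interior {[sum_m t_m s_m V_m] : all t_m > 0} misses all the planes eta_n *)
  exists s : I4 -> R, (forall m, s m = 1 \/ s m = -1) /\
    forall t : I4 -> R, (forall m, 0 < t m) ->
      forall n, ev (tEta T n) (fun r => sum4 (fun m => t m * s m * tV T m r)) <> 0.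

(** Same PGL(4)-class: T' = A . T (up to rescaling of each representative). *)
Definition tet_equiv (T T' : tetrep) : Prop :=
  exists A B : mat, inverse_pair A B /\
    forall m, proj_eq (tV T' m) (act_vec A (tV T m)) /\
              proj_eq (tEta T' m) (act_cov (tEta T m) B).

Definition pair_equiv (x y : tetrep * tetrep) : Prop :=
  exists A B : mat, inverse_pair A B /\
    forall m, proj_eq (tV (fst y) m) (act_vec A (tV (fst x) m)) /\
              proj_eq (tEta (fst y) m) (act_cov (tEta (fst x) m) B) /\
              proj_eq (tV (snd y) m) (act_vec A (tV (snd x) m)) /\
              proj_eq (tEta (snd y) m) (act_cov (tEta (snd x) m) B).

(** * Edge-faces: even permutations [ijkl] = [s i1, s i2, s i3, s i4] *)
Definition idx (a : I4) : nat := match a with i1 => 0 | i2 => 1 | i3 => 2 | i4 => 3 end%nat.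
Definition inv_pair (p : I4 -> I4) (a b : I4) : nat :=
  if Nat.ltb (idx (p b)) (idx (p a)) then 1%nat else 0%nat.
Definition inversions (p : I4 -> I4) : nat :=
  (inv_pair p i1 i2 + inv_pair p i1 i3 + inv_pair p i1 i4
   + inv_pair p i2 i3 + inv_pair p i2 i4 + inv_pair p i3 i4)%nat.
Definition is_edge_face (p : I4 -> I4) : Prop :=
  (forall a b, p a = p b -> a = b) /\ Nat.even (inversions p) = true.

Definition flag_eq (T : tetrep) (m : I4) (T' : tetrep) (m' : I4) : Prop :=
  proj_eq (tV T m) (tV T' m') /\ proj_eq (tEta T m) (tEta T' m').

Definition glued (sigma tau : I4 -> I4) (F E : tetrep) : Prop :=
  flag_eq F (sigma i1) E (tau i2) /\
  flag_eq F (sigma i2) E (tau i1) /\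
  flag_eq F (sigma i3) E (tau i3).

Definition glueable_classes (sigma tau : I4 -> I4) (F E : tetrep) : Prop :=
  exists F' E', is_tet_flags F' /\ is_tet_flags E' /\
    tet_equiv F F' /\ tet_equiv E E' /\ glued sigma tau F' E'.

(** Gluing parameter, computed on representatives; the plane eta_{ijk} is
    represented by the covector x |-> det(V_i, V_j, V_k, x). *)
Definition gluing_param (sigma tau : I4 -> I4) (F E : tetrep) : R :=
  let i := sigma i1 in let j := sigma i2 in let k := sigma i3 in let l := sigma i4 in
  let l' := tau i4 in
  let V := tV F in let eta := tEta F in let W := tV E in
  - (ev (eta i) (V l) * ev (eta j) (V k) * det4 (V i) (V j) (V k) (W l'))
  / (ev (eta i) (V k) * ev (eta j) (W l') * det4 (V i) (V j) (V k) (V l)).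

Definition FLrel (sigma tau : I4 -> I4) (x : tetrep * tetrep) : Prop :=
  is_tet_flags (fst x) /\ is_tet_flags (snd x) /\ glued sigma tau (fst x) (snd x).

Definition FLq (sigma tau : I4 -> I4) : Type :=
  { P : tetrep * tetrep -> Prop | exists x, FLrel sigma tau x /\ P = pair_equiv x }.

Definition rep {sigma tau} (q : FLq sigma tau) : tetrep * tetrep :=
  proj1_sig (constructive_indefinite_description _ (proj2_sig q)).

Definition g_bar (sigma tau : I4 -> I4) (q : FLq sigma tau) : R :=
  gluing_param sigma tau (fst (rep q)) (snd (rep q)).

(** Euclidean topology on the space of representatives (R^64). *)
Definition close (eps : R) (x y : tetrep * tetrep) : Prop :=
  forall m k,
    Rabs (tV (fst x) m k - tV (fst y) m k) < eps /\
    Rabs (tEta (fst x) m k - tEta (fst y) m k) < eps /\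
    Rabs (tV (snd x) m k - tV (snd y) m k) < eps /\
    Rabs (tEta (snd x) m k - tEta (snd y) m k) < eps.

Definition open_rep (O : tetrep * tetrep -> Prop) : Prop :=
  forall x, O x -> exists eps, 0 < eps /\ forall y, close eps x y -> O y.

(** Quotient topology on FLq: U is open iff its preimage in FL_{sigma,tau}
    is open in the subspace topology. *)
Definition open_FLq (sigma tau : I4 -> I4) (U : FLq sigma tau -> Prop) : Prop :=
  exists O, open_rep O /\
    forall x, FLrel sigma tau x -> ((exists q, U q /\ proj1_sig q x) <-> O x).

Definition Gset (sigma tau : I4 -> I4) (F E : tetrep) (q : FLq sigma tau) : Prop :=
  exists x, proj1_sig q x /\ tet_equiv F (fst x) /\ tet_equiv E (snd x).

Definition continuous_between {X Y : Type}
  (openX : (X -> Prop) -> Prop) (A : X -> Prop)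
  (openY : (Y -> Prop) -> Prop) (B : Y -> Prop) (f : X -> Y) : Prop :=
  forall V, openY V -> exists U, openX U /\ forall x, A x -> (V (f x) <-> U x).

Definition homeomorphism_between {X Y : Type}
  (openX : (X -> Prop) -> Prop) (A : X -> Prop)
  (openY : (Y -> Prop) -> Prop) (B : Y -> Prop) (f : X -> Y) : Prop :=
  (forall x, A x -> B (f x)) /\
  continuous_between openX A openY B f /\
  exists h : Y -> X,
    (forall y, B y -> A (h y)) /\
    (forall x, A x -> h (f x) = x) /\
    (forall y, B y -> f (h y) = y) /\
    continuous_between openY B openX A h.

(* Fix a glued pair (F0, E0) in the two classes. A projective map fixing the three shared
   flags (V_i, eta_i), (V_j, eta_j), (V_k, eta_k) is a multiple of a central collineation
   M_g = I + g P pi, with axis the plane pi = V_i V_j V_k and centre P = eta_i /\ eta_j /\ eta_k;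
   the convexity condition on F0 forces pi(P) <> 0. Hence every point of G is the class of
   (F0, M_g E0), whose gluing parameter is (1 + g pi(P)) times that of (F0, E0): an affine
   bijection from {g | 1 + g pi(P) <> 0} onto R^x. Both it and its inverse are rational in the
   coordinates, hence continuous. *)

From Pilot Require Import Defs.
From Stdlib Require Import Reals Lra Classical ClassicalEpsilon FunctionalExtensionality PropExtensionality ProofIrrelevance.
Open Scope R_scope.

Lemma act_vec_mul A B v r : act_vec (mat_mul A B) v r = act_vec A (act_vec B v) r.
Proof. unfold act_vec, mat_mul, sum4; ring. Qed.

Lemma act_cov_mul e A B c : act_cov e (mat_mul A B) c = act_cov (act_cov e A) B c.
Proof. unfold act_cov, mat_mul, sum4; ring. Qed.

Lemma act_vec_ext A A' v v' r :
  (forall r c, A r c = A' r c) -> (forall k, v k = v' k) -> act_vec A v r = act_vec A' v' r.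
Proof. intros HA Hv; unfold act_vec, sum4; rewrite !HA, !Hv; reflexivity. Qed.

Lemma act_cov_ext e e' A A' c :
  (forall r c, A r c = A' r c) -> (forall k, e k = e' k) -> act_cov e A c = act_cov e' A' c.
Proof. intros HA He; unfold act_cov, sum4; rewrite !HA, !He; reflexivity. Qed.

Lemma act_vec_id v r : act_vec id_mat v r = v r.
Proof. unfold act_vec, id_mat, sum4; destruct r; simpl; ring. Qed.

Lemma act_cov_id e c : act_cov e id_mat c = e c.
Proof. unfold act_cov, id_mat, sum4; destruct c; simpl; ring. Qed.

Lemma act_vec_scal A s v r : act_vec A (fun k => s * v k) r = s * act_vec A v r.
Proof. unfold act_vec, sum4; ring. Qed.

Lemma act_cov_scal A s e k : act_cov (fun r => s * e r) A k = s * act_cov e A k.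
Proof. unfold act_cov, sum4; ring. Qed.

Lemma act_vec_scal_mat A A' s v r :
  (forall r c, A r c = s * A' r c) -> act_vec A v r = s * act_vec A' v r.
Proof. intros HA; unfold act_vec, sum4; rewrite !HA; ring. Qed.

Lemma act_cov_scal_mat A A' s e k :
  (forall r c, A r c = s * A' r c) -> act_cov e A k = s * act_cov e A' k.
Proof. intros HA; unfold act_cov, sum4; rewrite !HA; ring. Qed.

Definition uvec (c : I4) : vec := fun r => if I4_eq_dec r c then 1 else 0.

Lemma act_vec_uvec A c r : act_vec A (uvec c) r = A r c.
Proof. unfold act_vec, uvec, sum4; destruct c; simpl; ring. Qed.

Lemma ev_ext e e' v v' : (forall k, e k = e' k) -> (forall k, v k = v' k) -> ev e v = ev e' v'.
Proof. intros He Hv; unfold ev, sum4; rewrite !He, !Hv; reflexivity. Qed.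

Lemma ev_act_vec e A v : ev e (act_vec A v) = ev (act_cov e A) v.
Proof. unfold ev, act_cov, act_vec, sum4; ring. Qed.

Lemma ev_lin e x y s t : ev e (fun k => s * x k + t * y k) = s * ev e x + t * ev e y.
Proof. unfold ev, sum4; ring. Qed.

Lemma ev_scal e v e' v' se sv :
  (forall k, e k = se * e' k) -> (forall k, v k = sv * v' k) -> ev e v = se * sv * ev e' v'.
Proof. intros He Hv; unfold ev, sum4; rewrite !He, !Hv; ring. Qed.

Lemma mat_mul_assoc A B C r c : mat_mul (mat_mul A B) C r c = mat_mul A (mat_mul B C) r c.
Proof. unfold mat_mul, sum4; ring. Qed.

Lemma mat_mul_ext A A' B B' r c :
  (forall r c, A r c = A' r c) -> (forall r c, B r c = B' r c) -> mat_mul A B r c = mat_mul A' B' r c.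
Proof. intros HA HB; unfold mat_mul, sum4; rewrite !HA, !HB; reflexivity. Qed.

Lemma mat_mul_id_l A r c : mat_mul id_mat A r c = A r c.
Proof. unfold mat_mul, id_mat, sum4; destruct r; simpl; ring. Qed.

Lemma mat_mul_id_r A r c : mat_mul A id_mat r c = A r c.
Proof. unfold mat_mul, id_mat, sum4; destruct c; simpl; ring. Qed.

Lemma mat_eq_of_act A A' : (forall v r, act_vec A v r = act_vec A' v r) -> forall r c, A r c = A' r c.
Proof. intros H r c; rewrite <- !act_vec_uvec; apply H. Qed.

Section InversePair.
Variables A B : mat.
Hypothesis HAB : inverse_pair A B.

Lemma inverse_pair_vec v r : act_vec B (act_vec A v) r = v r.
Proof.
  rewrite <- act_vec_mul, (act_vec_ext _ id_mat v v) by apply HAB || reflexivity.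
  apply act_vec_id.
Qed.

Lemma inverse_pair_cov e c : act_cov (act_cov e B) A c = e c.
Proof.
  rewrite <- act_cov_mul, (act_cov_ext _ e _ id_mat) by apply HAB || reflexivity.
  apply act_cov_id.
Qed.

Lemma inverse_pair_ev e v : ev (act_cov e B) (act_vec A v) = ev e v.
Proof.
  rewrite ev_act_vec; apply ev_ext; [|reflexivity].
  intro k; rewrite <- act_cov_mul, (act_cov_ext _ e _ id_mat) by apply HAB || reflexivity.
  apply act_cov_id.
Qed.

Lemma inverse_pair_unique B' : inverse_pair A B' -> forall r c, B' r c = B r c.
Proof.
  intros [_ HB'A] r c.
  rewrite <- mat_mul_id_r, (mat_mul_ext B' B' id_mat (mat_mul A B)) by (intros; symmetry; apply HAB || reflexivity).
  rewrite <- mat_mul_assoc, (mat_mul_ext _ id_mat B B) by (intros; apply HB'A || reflexivity).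
  apply mat_mul_id_l.
Qed.

End InversePair.

Lemma inverse_pair_sym A B : inverse_pair A B -> inverse_pair B A.
Proof. intros [H1 H2]; split; auto. Qed.

Lemma inverse_pair_id : inverse_pair id_mat id_mat.
Proof. split; intros; apply mat_mul_id_l. Qed.

Lemma inverse_pair_mul A B A' B' :
  inverse_pair A B -> inverse_pair A' B' -> inverse_pair (mat_mul A' A) (mat_mul B B').
Proof.
  intros [H1 H2] [H3 H4]; split; intros r c; rewrite mat_mul_assoc.
  - transitivity (mat_mul A' B' r c); auto. apply mat_mul_ext; [reflexivity|].
    intros r' c'; rewrite <- mat_mul_assoc, (mat_mul_ext _ id_mat B' B') by auto.
    apply mat_mul_id_l.
  - transitivity (mat_mul B A r c); auto. apply mat_mul_ext; [reflexivity|].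
    intros r' c'; rewrite <- mat_mul_assoc, (mat_mul_ext _ id_mat A A) by auto.
    apply mat_mul_id_l.
Qed.

Definition detm (A : mat) : R :=
  det4 (fun r => A r i1) (fun r => A r i2) (fun r => A r i3) (fun r => A r i4).

Lemma det4_ext a b c d a' b' c' d' :
  (forall k, a k = a' k) -> (forall k, b k = b' k) -> (forall k, c k = c' k) -> (forall k, d k = d' k) ->
  det4 a b c d = det4 a' b' c' d'.
Proof. intros Ha Hb Hc Hd; unfold det4, det3_234; rewrite !Ha, !Hb, !Hc, !Hd; reflexivity. Qed.

Lemma det4_scal a b c d a' b' c' d' sa sb sc sd :
  (forall k, a k = sa * a' k) -> (forall k, b k = sb * b' k) ->
  (forall k, c k = sc * c' k) -> (forall k, d k = sd * d' k) ->
  det4 a b c d = sa * sb * sc * sd * det4 a' b' c' d'.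
Proof. intros Ha Hb Hc Hd; unfold det4, det3_234; rewrite !Ha, !Hb, !Hc, !Hd; ring. Qed.

Lemma det4_act A a b c d :
  det4 (act_vec A a) (act_vec A b) (act_vec A c) (act_vec A d) = detm A * det4 a b c d.
Proof. unfold detm, det4, det3_234, act_vec, sum4; ring. Qed.

Lemma detm_nonzero A B : inverse_pair A B -> detm A <> 0.
Proof.
  intros [HAB _] E.
  assert (H1 : detm (mat_mul A B) = detm A * detm B).
  { unfold detm at 1 3; rewrite <- det4_act; apply det4_ext; reflexivity. }
  assert (H2 : detm (mat_mul A B) = 1).
  { transitivity (detm id_mat); [apply det4_ext; intro; apply HAB|].
    unfold detm, id_mat, det4, det3_234; simpl; ring. }
  rewrite E in H1; lra.
Qed.

Lemma cramer a b c d x r :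
  det4 a b c d * x r =
  det4 x b c d * a r + det4 a x c d * b r + det4 a b x d * c r + det4 a b c x * d r.
Proof. unfold det4, det3_234; destruct r; ring. Qed.

Lemma det4_perm_nonzero (W : I4 -> vec) a b c d :
  a <> b -> a <> c -> a <> d -> b <> c -> b <> d -> c <> d ->
  det4 (W i1) (W i2) (W i3) (W i4) <> 0 -> det4 (W a) (W b) (W c) (W d) <> 0.
Proof.
  intros; destruct a, b, c, d; try congruence; unfold det4, det3_234 in *;
  intro; lra.
Qed.

Lemma proj_eq_refl v : proj_eq v v.
Proof. exists 1; split; [lra | intros; ring]. Qed.

Lemma proj_eq_sym v w : proj_eq v w -> proj_eq w v.
Proof.
  intros [c [Hc H]]; exists (/ c); split; [now apply Rinv_neq_0_compat|].
  intro k; rewrite H; field; auto.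
Qed.

Lemma proj_eq_trans u v w : proj_eq u v -> proj_eq v w -> proj_eq u w.
Proof.
  intros [c [Hc H]] [d [Hd H']]; exists (c * d); split.
  - now apply Rmult_integral_contrapositive_currified.
  - intro k; rewrite H, H'; ring.
Qed.

Lemma proj_eq_ext v v' w w' :
  (forall k, v k = v' k) -> (forall k, w k = w' k) -> proj_eq v w -> proj_eq v' w'.
Proof. intros Hv Hw [c [Hc H]]; exists c; split; auto; intro k; rewrite <- Hv, <- Hw; auto. Qed.

Lemma proj_eq_act_vec A v w : proj_eq v w -> proj_eq (act_vec A v) (act_vec A w).
Proof.
  intros [c [Hc H]]; exists c; split; auto.
  intro k; rewrite <- act_vec_scal; apply act_vec_ext; auto.
Qed.

Lemma proj_eq_act_cov B e e' : proj_eq e e' -> proj_eq (act_cov e B) (act_cov e' B).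
Proof.
  intros [c [Hc H]]; exists c; split; auto.
  intro k; rewrite <- act_cov_scal; apply act_cov_ext; auto.
Qed.

Lemma proj_eq_ev_zero_r e v v' : proj_eq v v' -> ev e v' = 0 -> ev e v = 0.
Proof. intros [c [_ H]] Z; rewrite (ev_scal e v e v' 1 c) by (auto; intros; ring); rewrite Z; ring. Qed.

Lemma proj_eq_ev_zero_l e e' v : proj_eq e e' -> ev e' v = 0 -> ev e v = 0.
Proof. intros [c [_ H]] Z; rewrite (ev_scal e v e' v c 1) by (auto; intros; ring); rewrite Z; ring. Qed.

Definition trel (A B : mat) (T T' : tetrep) : Prop :=
  forall m, proj_eq (tV T' m) (act_vec A (tV T m)) /\ proj_eq (tEta T' m) (act_cov (tEta T m) B).

Lemma trel_id T : trel id_mat id_mat T T.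
Proof.
  intro m; split; eapply proj_eq_ext; try apply proj_eq_refl; intro k; try reflexivity.
  - symmetry; apply act_vec_id.
  - symmetry; apply act_cov_id.
Qed.

Lemma trel_sym A B T T' : inverse_pair A B -> trel A B T T' -> trel B A T' T.
Proof.
  intros HI H m; destruct (H m) as [HV HE]; split; apply proj_eq_sym.
  - eapply proj_eq_ext; [| | exact (proj_eq_act_vec B _ _ HV)];
      intro; [reflexivity | now apply inverse_pair_vec].
  - eapply proj_eq_ext; [| | exact (proj_eq_act_cov A _ _ HE)];
      intro; [reflexivity | now apply inverse_pair_cov].
Qed.

Lemma trel_trans A B A' B' T T' T'' :
  trel A B T T' -> trel A' B' T' T'' -> trel (mat_mul A' A) (mat_mul B B') T T''.
Proof.
  intros H H' m; destruct (H m) as [HV HE], (H' m) as [HV' HE']; split.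
  - eapply proj_eq_trans; [exact HV'|].
    eapply proj_eq_ext; [| | exact (proj_eq_act_vec A' _ _ HV)];
      intro; [reflexivity | symmetry; apply act_vec_mul].
  - eapply proj_eq_trans; [exact HE'|].
    eapply proj_eq_ext; [| | exact (proj_eq_act_cov B' _ _ HE)];
      intro; [reflexivity | symmetry; apply act_cov_mul].
Qed.

Lemma tet_equiv_sym T T' : tet_equiv T T' -> tet_equiv T' T.
Proof.
  intros [A [B [HI H]]]; exists B, A; split; [now apply inverse_pair_sym|].
  exact (trel_sym A B T T' HI H).
Qed.

Lemma tet_equiv_trans T T' T'' : tet_equiv T T' -> tet_equiv T' T'' -> tet_equiv T T''.
Proof.
  intros [A [B [HI H]]] [A' [B' [HI' H']]].
  exists (mat_mul A' A), (mat_mul B B'); split; [now apply inverse_pair_mul|].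
  exact (trel_trans A B A' B' T T' T'' H H').
Qed.

Lemma pair_equiv_iff x y :
  pair_equiv x y <->
  exists A B, inverse_pair A B /\ trel A B (fst x) (fst y) /\ trel A B (snd x) (snd y).
Proof.
  split.
  - intros [A [B [HI H]]]; exists A, B; split; [auto | split]; intro m; split; apply H.
  - intros [A [B [HI [H1 H2]]]]; exists A, B; split; auto.
    intro m; destruct (H1 m), (H2 m); auto.
Qed.

Lemma pair_equiv_refl x : pair_equiv x x.
Proof. apply pair_equiv_iff; exists id_mat, id_mat; auto using inverse_pair_id, trel_id. Qed.

Lemma pair_equiv_sym x y : pair_equiv x y -> pair_equiv y x.
Proof.
  rewrite !pair_equiv_iff; intros [A [B [HI [H1 H2]]]].
  exists B, A; auto using inverse_pair_sym, trel_sym.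
Qed.

Lemma pair_equiv_trans x y z : pair_equiv x y -> pair_equiv y z -> pair_equiv x z.
Proof.
  rewrite !pair_equiv_iff; intros [A [B [HI [H1 H2]]]] [A' [B' [HI' [H1' H2']]]].
  exists (mat_mul A' A), (mat_mul B B'); split; [|split]; eauto using inverse_pair_mul, trel_trans.
Qed.

Lemma pair_equiv_fst x y : pair_equiv x y -> tet_equiv (fst x) (fst y).
Proof. rewrite pair_equiv_iff; intros [A [B [HI [H1 _]]]]; exists A, B; auto. Qed.

Lemma pair_equiv_snd x y : pair_equiv x y -> tet_equiv (snd x) (snd y).
Proof. rewrite pair_equiv_iff; intros [A [B [HI [_ H2]]]]; exists A, B; auto. Qed.

Lemma pair_equiv_classes x y : pair_equiv x y -> pair_equiv x = pair_equiv y.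
Proof.
  intros H; apply functional_extensionality; intro z; apply propositional_extensionality.
  split; intro H'; eauto using pair_equiv_trans, pair_equiv_sym.
Qed.

Definition tact (A B : mat) (T : tetrep) : tetrep :=
  (fun m => act_vec A (tV T m), fun m => act_cov (tEta T m) B).

Lemma trel_tact A B T : trel A B T (tact A B T).
Proof. intro m; split; apply proj_eq_refl. Qed.

Lemma tet_equiv_tact A B T : inverse_pair A B -> tet_equiv T (tact A B T).
Proof. intros HI; exists A, B; split; [exact HI | apply trel_tact]. Qed.

Lemma nonzero_act_vec A B v : inverse_pair A B -> Defs.nonzero v -> Defs.nonzero (act_vec A v).
Proof.
  intros HI [k Hk]; apply NNPP; intro Hn; apply Hk.
  rewrite <- (inverse_pair_vec A B HI v k); unfold act_vec at 1, sum4.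
  assert (Z : forall r, act_vec A v r = 0) by (intro r; apply NNPP; intro; apply Hn; now exists r).
  rewrite !Z; ring.
Qed.

Lemma nonzero_act_cov A B e : inverse_pair A B -> Defs.nonzero e -> Defs.nonzero (act_cov e B).
Proof.
  intros HI [k Hk]; apply NNPP; intro Hn; apply Hk.
  rewrite <- (inverse_pair_cov A B HI e k); unfold act_cov at 1, sum4.
  assert (Z : forall r, act_cov e B r = 0) by (intro r; apply NNPP; intro; apply Hn; now exists r).
  rewrite !Z; ring.
Qed.

Lemma is_tet_flags_tact A B T : inverse_pair A B -> is_tet_flags T -> is_tet_flags (tact A B T).
Proof.
  intros HI [HV [HE [Hev [Hdet [s [Hs Hconv]]]]]]; unfold is_tet_flags, tact, tV, tEta in *; cbn [fst snd].
  repeat split.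
  - intro m; now apply nonzero_act_vec with B.
  - intro m; now apply nonzero_act_cov with A.
  - intros Hij; apply Hev; now rewrite <- (inverse_pair_ev A B HI).
  - intros Hij; rewrite (inverse_pair_ev A B HI); now apply Hev.
  - rewrite det4_act; apply Rmult_integral_contrapositive_currified; eauto using detm_nonzero.
  - exists s; split; auto; intros t Ht n.
    rewrite (ev_ext _ (act_cov (snd T n) B) _ (act_vec A (fun r => sum4 (fun m => t m * s m * fst T m r))))
      by (intros; try reflexivity; unfold act_vec, sum4; ring).
    rewrite (inverse_pair_ev A B HI); auto.
Qed.

Definition glue_num (ei ej vi vj vk vl w : vec) : R := ev ei vl * ev ej vk * det4 vi vj vk w.
Definition glue_den (ei ej vi vj vk vl w : vec) : R := ev ei vk * ev ej w * det4 vi vj vk vl.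

Definition at_edge (sigma tau : I4 -> I4) (f : vec -> vec -> vec -> vec -> vec -> vec -> vec -> R)
  (x : tetrep * tetrep) : R :=
  f (tEta (fst x) (sigma i1)) (tEta (fst x) (sigma i2)) (tV (fst x) (sigma i1)) (tV (fst x) (sigma i2))
    (tV (fst x) (sigma i3)) (tV (fst x) (sigma i4)) (tV (snd x) (tau i4)).

Lemma gluing_param_at_edge sigma tau x :
  gluing_param sigma tau (fst x) (snd x) = - at_edge sigma tau glue_num x / at_edge sigma tau glue_den x.
Proof. reflexivity. Qed.

Lemma glue_ratio_invariant A B ei ej vi vj vk vl w ei' ej' vi' vj' vk' vl' w' :
  inverse_pair A B ->
  proj_eq ei' (act_cov ei B) -> proj_eq ej' (act_cov ej B) ->
  proj_eq vi' (act_vec A vi) -> proj_eq vj' (act_vec A vj) -> proj_eq vk' (act_vec A vk) ->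
  proj_eq vl' (act_vec A vl) -> proj_eq w' (act_vec A w) ->
  - glue_num ei' ej' vi' vj' vk' vl' w' / glue_den ei' ej' vi' vj' vk' vl' w'
  = - glue_num ei ej vi vj vk vl w / glue_den ei ej vi vj vk vl w.
Proof.
  intros HI [c1 [N1 H1]] [c2 [N2 H2]] [c3 [N3 H3]] [c4 [N4 H4]] [c5 [N5 H5]] [c6 [N6 H6]] [c7 [N7 H7]].
  unfold glue_num, glue_den.
  rewrite (ev_scal _ _ _ _ _ _ H1 H6), (ev_scal _ _ _ _ _ _ H2 H5), (ev_scal _ _ _ _ _ _ H1 H5),
    (ev_scal _ _ _ _ _ _ H2 H7), (det4_scal _ _ _ _ _ _ _ _ _ _ _ _ H3 H4 H5 H7),
    (det4_scal _ _ _ _ _ _ _ _ _ _ _ _ H3 H4 H5 H6), !det4_act, !(inverse_pair_ev A B HI).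
  set (K := c1 * c6 * c2 * c5 * c3 * c4 * c5 * c7 * detm A).
  assert (HK : K <> 0).
  { pose proof (detm_nonzero A B HI).
    unfold K; repeat apply Rmult_integral_contrapositive_currified; auto. }
  set (n := ev ei vl * ev ej vk * det4 vi vj vk w).
  set (d := ev ei vk * ev ej w * det4 vi vj vk vl).
  replace (c1 * c6 * ev ei vl * (c2 * c5 * ev ej vk) * (c3 * c4 * c5 * c7 * (detm A * det4 vi vj vk w)))
    with (K * n) by (unfold K, n; ring).
  replace (c1 * c5 * ev ei vk * (c2 * c7 * ev ej w) * (c3 * c4 * c5 * c6 * (detm A * det4 vi vj vk vl)))
    with (K * d) by (unfold K, d; ring).
  destruct (Req_dec d 0) as [-> | Hd].
  - rewrite Rmult_0_r; unfold Rdiv; rewrite Rinv_0; ring.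
  - field; auto.
Qed.

Lemma gluing_param_invariant sigma tau x y :
  pair_equiv x y -> gluing_param sigma tau (fst x) (snd x) = gluing_param sigma tau (fst y) (snd y).
Proof.
  intros [A [B [HI H]]]; rewrite !gluing_param_at_edge; symmetry.
  apply (glue_ratio_invariant A B); auto; apply H.
Qed.

Lemma inj_neq (s : I4 -> I4) a b : (forall x y, s x = s y -> x = y) -> a <> b -> s a <> s b.
Proof. intros H N E; apply N, H, E. Qed.

Lemma ev_nonzero T i j : is_tet_flags T -> i <> j -> ev (tEta T i) (tV T j) <> 0.
Proof. intros [_ [_ [H _]]] N E; apply N, H, E. Qed.

Lemma ev_diag T m : is_tet_flags T -> ev (tEta T m) (tV T m) = 0.
Proof. intros [_ [_ [H _]]]; now apply H. Qed.

Lemma det4_nonzero T : is_tet_flags T -> det4 (tV T i1) (tV T i2) (tV T i3) (tV T i4) <> 0.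
Proof. intros [_ [_ [_ [H _]]]]; exact H. Qed.

Lemma glue_num_den_nonzero sigma tau x :
  is_edge_face sigma -> is_edge_face tau -> FLrel sigma tau x ->
  at_edge sigma tau glue_num x <> 0 /\ at_edge sigma tau glue_den x <> 0.
Proof.
  intros [Is _] [It _]
    [HF [HE [[[c1 [N1 H1]] _] [[[c2 [N2 H2]] [d2 [M2 K2]]] [[c3 [N3 H3]] _]]]]].
  unfold at_edge, glue_num, glue_den.
  pose proof (det4_nonzero _ HF); pose proof (det4_nonzero _ HE).
  split; repeat apply Rmult_integral_contrapositive_currified;
    try (apply ev_nonzero; auto; apply (inj_neq sigma); auto; discriminate).
  - rewrite (det4_scal _ _ _ _ _ _ _ _ c1 c2 c3 1 H1 H2 H3 (fun k => eq_sym (Rmult_1_l _))).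
    repeat apply Rmult_integral_contrapositive_currified; auto; try lra.
    apply det4_perm_nonzero; auto; apply (inj_neq tau); auto; discriminate.
  - rewrite (ev_scal _ _ _ _ d2 1 K2 (fun k => eq_sym (Rmult_1_l _))).
    repeat apply Rmult_integral_contrapositive_currified; auto; try lra.
    apply ev_nonzero; auto; apply (inj_neq tau); auto; discriminate.
  - apply det4_perm_nonzero; auto; apply (inj_neq sigma); auto; discriminate.
Qed.

Lemma gluing_param_nonzero sigma tau x :
  is_edge_face sigma -> is_edge_face tau -> FLrel sigma tau x ->
  gluing_param sigma tau (fst x) (snd x) <> 0.
Proof.
  intros Hs Ht Hx; destruct (glue_num_den_nonzero sigma tau x Hs Ht Hx) as [Hn Hd].
  rewrite gluing_param_at_edge; unfold Rdiv.
  apply Rmult_integral_contrapositive_currified; [lra | now apply Rinv_neq_0_compat].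
Qed.

(** Otherwise raising the weight of one of the two makes the combination vanish. *)
Lemma positive_combination_same_sign (a : I4 -> R) b b' :
  b <> b' -> a b <> 0 -> a b' <> 0 ->
  (forall t : I4 -> R, (forall m, 0 < t m) -> sum4 (fun m => t m * a m) <> 0) ->
  0 < a b * a b'.
Proof.
  intros Hbb' Hb Hb' Hpos.
  set (S := sum4 a).
  assert (Kill : forall c, a c <> 0 -> S * a c <= 0 -> False).
  { intros c Hc HS.
    set (x := - S / a c).
    assert (Hx : 0 <= x).
    { unfold x; replace (- S / a c) with (- (S * a c) / (a c * a c)) by (field; auto).
      apply Rmult_le_pos; [lra|]; left; apply Rinv_0_lt_compat.
      destruct (Rlt_or_le 0 (a c)); nra. }
    apply (Hpos (fun m => if I4_eq_dec m c then 1 + x else 1)).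
    - intro m; destruct (I4_eq_dec m c); lra.
    - replace (sum4 (fun m => (if I4_eq_dec m c then 1 + x else 1) * a m)) with (S + x * a c)
        by (unfold S, sum4; destruct c; simpl; ring).
      unfold x; field; auto. }
  destruct (Rlt_or_le 0 (a b * a b')) as [P | P]; auto; exfalso.
  destruct (Rle_or_lt (S * a b) 0) as [Q | Q]; [exact (Kill b Hb Q)|].
  apply (Kill b' Hb').
  assert (0 < a b * a b) by (destruct (Rlt_or_le 0 (a b)); nra).
  assert (a b * a b' <> 0) by (apply Rmult_integral_contrapositive_currified; auto).
  nra.
Qed.

Lemma tet_flags_signs T :
  is_tet_flags T -> exists s : I4 -> R, (forall m, s m = 1 \/ s m = -1) /\
    forall n b b', b <> b' -> b <> n -> b' <> n ->
      0 < ev (tEta T n) (tV T b) * s b * (ev (tEta T n) (tV T b') * s b').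
Proof.
  intros HT; pose proof HT as [_ [_ [_ [_ [s [Hs Hconv]]]]]].
  exists s; split; auto; intros n b b' Hbb' Hb Hb'.
  assert (Sn : forall m, s m <> 0) by (intro m; destruct (Hs m); lra).
  apply (positive_combination_same_sign (fun m => ev (tEta T n) (tV T m) * s m));
    try (apply Rmult_integral_contrapositive_currified; auto; now apply ev_nonzero).
  - exact Hbb'.
  - intros t Ht; specialize (Hconv t Ht n).
    replace (sum4 (fun m => t m * (ev (tEta T n) (tV T m) * s m)))
      with (ev (tEta T n) (fun r => sum4 (fun m => t m * s m * tV T m r)))
      by (unfold ev, sum4; ring).
    exact Hconv.
Qed.

Lemma cyclic_products_nonzero x y z w u v sa sb sc :
  (sa = 1 \/ sa = -1) -> (sb = 1 \/ sb = -1) -> (sc = 1 \/ sc = -1) ->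
  0 < x * sb * (y * sc) -> 0 < z * sa * (w * sc) -> 0 < u * sa * (v * sb) ->
  x * w * u + y * z * v <> 0.
Proof.
  intros Ha Hb Hc P1 P2 P3.
  assert (E : x * w * u * (y * z * v) = (x * sb * (y * sc)) * (z * sa * (w * sc)) * (u * sa * (v * sb)))
    by (destruct Ha as [-> | ->]; destruct Hb as [-> | ->]; destruct Hc as [-> | ->]; ring).
  assert (0 < x * w * u * (y * z * v)) by (rewrite E; apply Rmult_lt_0_compat; [apply Rmult_lt_0_compat|]; auto).
  intro S; replace (y * z * v) with (- (x * w * u)) in H by lra; nra.
Qed.

(** For vectors, the plane through [a b c]; for covectors, the common point of the three planes. *)
Definition wedge3 (a b c : vec) : vec := fun k => det4 a b c (uvec k).

Lemma ev_wedge3_l a b c x : ev (wedge3 a b c) x = det4 a b c x.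
Proof. unfold ev, wedge3, uvec, det4, det3_234, sum4; simpl; ring. Qed.

Lemma ev_wedge3_r a b c x : ev x (wedge3 a b c) = det4 a b c x.
Proof. unfold ev, wedge3, uvec, det4, det3_234, sum4; simpl; ring. Qed.

Lemma wedge3_vanish a b c : ev (wedge3 a b c) a = 0 /\ ev (wedge3 a b c) b = 0 /\ ev (wedge3 a b c) c = 0.
Proof. rewrite !ev_wedge3_l; unfold det4, det3_234; repeat split; ring. Qed.

Lemma wedge3_vanish_r a b c : ev a (wedge3 a b c) = 0 /\ ev b (wedge3 a b c) = 0 /\ ev c (wedge3 a b c) = 0.
Proof. rewrite !ev_wedge3_r; unfold det4, det3_234; repeat split; ring. Qed.

Lemma ev_wedge3_wedge3 a b c ea eb ec :
  ev ea a = 0 -> ev eb b = 0 -> ev ec c = 0 ->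
  ev (wedge3 a b c) (wedge3 ea eb ec)
  = ev ea b * ev eb c * ev ec a + ev ea c * ev eb a * ev ec b.
Proof.
  intros Ha Hb Hc.
  assert (Binet : ev (wedge3 a b c) (wedge3 ea eb ec) =
      ev ea a * (ev eb b * ev ec c - ev eb c * ev ec b)
    - ev ea b * (ev eb a * ev ec c - ev eb c * ev ec a)
    + ev ea c * (ev eb a * ev ec b - ev eb b * ev ec a)).
  { rewrite ev_wedge3_l; unfold wedge3, uvec, ev, det4, det3_234, sum4; simpl; ring. }
  rewrite Binet, Ha, Hb, Hc; ring.
Qed.

(** Axis [pi], centre [P]: it fixes [pi] pointwise and scales [P] by [1 + g * ev pi P]. *)
Definition central_collineation (pi P : vec) (g : R) : mat :=
  fun r c => id_mat r c + g * P r * pi c.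

Lemma act_vec_central_collineation pi P g x r :
  act_vec (central_collineation pi P g) x r = x r + g * ev pi x * P r.
Proof. unfold act_vec, central_collineation, id_mat, ev, sum4; destruct r; simpl; ring. Qed.

Lemma act_cov_central_collineation pi P g e c :
  act_cov e (central_collineation pi P g) c = e c + g * ev e P * pi c.
Proof. unfold act_cov, central_collineation, id_mat, ev, sum4; destruct c; simpl; ring. Qed.

Definition collineation_inv_param (kap g : R) : R := - g / (1 + g * kap).

Lemma central_collineation_inverse pi P g :
  1 + g * ev pi P <> 0 ->
  inverse_pair (central_collineation pi P g)
               (central_collineation pi P (collineation_inv_param (ev pi P) g)).
Proof.
  intros H; split; intros r c;
    unfold mat_mul, central_collineation, collineation_inv_param, id_mat;
    unfold ev in H |- *; unfold sum4 in *; destruct r, c; simpl; field; auto.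
Qed.

Lemma inverse_pair_scale A B A' s :
  inverse_pair A B -> s <> 0 -> (forall r c, A' r c = s * A r c) ->
  inverse_pair A' (fun r c => / s * B r c).
Proof.
  intros [H1 H2] Hs HA; split; intros r c; [rewrite <- H1 | rewrite <- H2];
    unfold mat_mul, sum4; rewrite !HA; field; auto.
Qed.

Lemma proj_eq_eigen_vec N v :
  proj_eq v (act_vec N v) -> exists mu, mu <> 0 /\ forall r, act_vec N v r = mu * v r.
Proof.
  intros [c [Hc H]]; exists (/ c); split; [now apply Rinv_neq_0_compat|].
  intro r; rewrite H; field; auto.
Qed.

Lemma proj_eq_eigen_cov N N' e :
  inverse_pair N N' -> proj_eq e (act_cov e N') ->
  exists nu, nu <> 0 /\ forall k, act_cov e N k = nu * e k.
Proof.
  intros HI [c [Hc H]]; exists c; split; auto; intro k.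
  rewrite (act_cov_ext e (fun r => c * act_cov e N' r) N N), act_cov_scal by auto.
  now rewrite (inverse_pair_cov N N' HI).
Qed.

Lemma eigenvalues_agree N e v mu nu :
  (forall r, act_vec N v r = mu * v r) -> (forall k, act_cov e N k = nu * e k) ->
  ev e v <> 0 -> mu = nu.
Proof.
  intros Hv He Hev; apply Rmult_eq_reg_r with (ev e v); auto.
  assert (Emu : ev e (act_vec N v) = 1 * mu * ev e v)
    by (apply ev_scal; intros; rewrite ?Hv; ring).
  assert (Enu : ev (act_cov e N) v = nu * 1 * ev e v)
    by (apply ev_scal; intros; rewrite ?He; ring).
  rewrite ev_act_vec in Emu; lra.
Qed.

Lemma act_vec_fixing_face N a b c d alpha x r :
  det4 a b c d <> 0 ->
  (forall r, act_vec N a r = alpha * a r) -> (forall r, act_vec N b r = alpha * b r) ->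
  (forall r, act_vec N c r = alpha * c r) ->
  act_vec N x r = alpha * x r + det4 a b c x / det4 a b c d * (act_vec N d r - alpha * d r).
Proof.
  intros HD Ha Hb Hc; set (D := det4 a b c d).
  apply Rmult_eq_reg_r with D; auto.
  transitivity (act_vec N (fun k => D * x k) r); [rewrite act_vec_scal; ring|].
  rewrite (act_vec_ext N N _ (fun k => det4 x b c d * a k + det4 a x c d * b k
                                        + det4 a b x d * c k + det4 a b c x * d k))
    by (intros; first [reflexivity | apply cramer]).
  replace (act_vec N (fun k => det4 x b c d * a k + det4 a x c d * b k + det4 a b x d * c k + det4 a b c x * d k) r)
    with (det4 x b c d * act_vec N a r + det4 a x c d * act_vec N b r + det4 a b x d * act_vec N c r
          + det4 a b c x * act_vec N d r) by (unfold act_vec, sum4; ring).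
  rewrite Ha, Hb, Hc; pose proof (cramer a b c d x r) as C; fold D in C.
  replace ((alpha * x r + det4 a b c x / D * (act_vec N d r - alpha * d r)) * D)
    with (alpha * (D * x r) + det4 a b c x * (act_vec N d r - alpha * d r)) by (field; auto).
  rewrite C; ring.
Qed.

Lemma zero_diagonal_system_trivial p q r t y z s1 s2 s3 :
  p * t * y + q * r * z <> 0 ->
  s2 * p + s3 * q = 0 -> s1 * r + s3 * t = 0 -> s1 * y + s2 * z = 0 ->
  s1 = 0 /\ s2 = 0 /\ s3 = 0.
Proof.
  intros HG E1 E2 E3; repeat split; apply Rmult_eq_reg_r with (p * t * y + q * r * z); auto.
  - transitivity (p * t * (s1 * y + s2 * z) + q * z * (s1 * r + s3 * t) - t * z * (s2 * p + s3 * q));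
      [ring | rewrite E1, E2, E3; ring].
  - transitivity (t * y * (s2 * p + s3 * q) + q * r * (s1 * y + s2 * z) - q * y * (s1 * r + s3 * t));
      [ring | rewrite E1, E2, E3; ring].
  - transitivity (r * z * (s2 * p + s3 * q) + p * y * (s1 * r + s3 * t) - p * r * (s1 * y + s2 * z));
      [ring | rewrite E1, E2, E3; ring].
Qed.

Section ThreeFlags.
Variables (a b c d ea eb ec : vec).
Hypotheses (HD : det4 a b c d <> 0) (Ha : ev ea a = 0) (Hb : ev eb b = 0) (Hc : ev ec c = 0)
  (HG : ev ea b * ev eb c * ev ec a + ev ea c * ev eb a * ev ec b <> 0).

Let pi := wedge3 a b c.
Let P := wedge3 ea eb ec.

Lemma ev_plane_point : ev pi P = ev ea b * ev eb c * ev ec a + ev ea c * ev eb a * ev ec b.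
Proof. now apply ev_wedge3_wedge3. Qed.

(** Expand [u] in the basis [a b c d]: [det4 a b c u = 0] kills the [d]-coordinate, and the
    three planes leave a system of determinant [HG]. *)
Lemma vanish_three_planes_zero u :
  ev ea u = 0 -> ev eb u = 0 -> ev ec u = 0 -> det4 a b c u = 0 -> forall r, u r = 0.
Proof.
  intros Ua Ub Uc Upi.
  set (s1 := det4 u b c d); set (s2 := det4 a u c d); set (s3 := det4 a b u d).
  assert (Exp : forall e, det4 a b c d * ev e u = s1 * ev e a + s2 * ev e b + s3 * ev e c).
  { intro e; transitivity (ev e (fun k => det4 a b c d * u k)); [unfold ev, sum4; ring|].
    rewrite (ev_ext e e _ (fun k => s1 * a k + s2 * b k + s3 * c k + det4 a b c u * d k))
      by (intros; first [reflexivity | apply cramer]).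
    rewrite Upi; unfold ev, sum4; ring. }
  pose proof (Exp ea) as E1; pose proof (Exp eb) as E2; pose proof (Exp ec) as E3.
  rewrite Ua, Ha in E1; rewrite Ub, Hb in E2; rewrite Uc, Hc in E3.
  destruct (zero_diagonal_system_trivial (ev ea b) (ev ea c) (ev eb a) (ev eb c) (ev ec a) (ev ec b)
              s1 s2 s3) as [S1 [S2 S3]]; auto; try lra.
  intro r; apply Rmult_eq_reg_l with (det4 a b c d); auto.
  rewrite cramer, Upi; fold s1 s2 s3; rewrite S1, S2, S3; ring.
Qed.

Lemma plane_point_nonzero : ev pi P <> 0.
Proof. now rewrite ev_plane_point. Qed.

Lemma vanish_three_planes_proportional u :
  ev ea u = 0 -> ev eb u = 0 -> ev ec u = 0 -> forall r, u r = det4 a b c u / ev pi P * P r.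
Proof.
  intros Ua Ub Uc; pose proof plane_point_nonzero as Hk.
  set (s := det4 a b c u / ev pi P).
  assert (Lin : forall e, ev e (fun r => u r - s * P r) = ev e u - s * ev e P).
  { intro e; unfold ev, sum4; ring. }
  destruct (wedge3_vanish_r ea eb ec) as [Pa [Pb Pc]]; fold P in Pa, Pb, Pc.
  intro r; apply Rminus_diag_uniq.
  apply (vanish_three_planes_zero (fun r => u r - s * P r)); rewrite ?Lin; fold P.
  - rewrite Ua, Pa; ring.
  - rewrite Ub, Pb; ring.
  - rewrite Uc, Pc; ring.
  - rewrite <- ev_wedge3_l, Lin, ev_wedge3_l; fold pi; unfold s; field; auto.
Qed.

Section Stabilizer.
Variables N N' : mat.
Hypothesis HI : inverse_pair N N'.

Lemma stabilizer_common_eigenvalue :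
  ev ea b <> 0 -> ev ea c <> 0 -> ev eb a <> 0 -> ev eb c <> 0 -> ev ec a <> 0 ->
  proj_eq a (act_vec N a) -> proj_eq b (act_vec N b) -> proj_eq c (act_vec N c) ->
  proj_eq ea (act_cov ea N') -> proj_eq eb (act_cov eb N') -> proj_eq ec (act_cov ec N') ->
  exists alpha, alpha <> 0 /\
    (forall r, act_vec N a r = alpha * a r) /\ (forall r, act_vec N b r = alpha * b r) /\
    (forall r, act_vec N c r = alpha * c r) /\ (forall k, act_cov ea N k = alpha * ea k) /\
    (forall k, act_cov eb N k = alpha * eb k) /\ (forall k, act_cov ec N k = alpha * ec k).
Proof.
  intros Hab Hac Hba Hbc Hca Fa Fb Fc Fea Feb Fec.
  destruct (proj_eq_eigen_vec N a Fa) as [alpha [Hal Ma]].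
  destruct (proj_eq_eigen_vec N b Fb) as [mb [_ Mb]].
  destruct (proj_eq_eigen_vec N c Fc) as [mc [_ Mc]].
  destruct (proj_eq_eigen_cov N N' ea HI Fea) as [na [_ Na]].
  destruct (proj_eq_eigen_cov N N' eb HI Feb) as [nb [_ Nb]].
  destruct (proj_eq_eigen_cov N N' ec HI Fec) as [nc [_ Nc]].
  assert (Enb : alpha = nb) by exact (eigenvalues_agree N eb a _ _ Ma Nb Hba).
  assert (Enc : alpha = nc) by exact (eigenvalues_agree N ec a _ _ Ma Nc Hca).
  assert (Emc : mc = alpha) by (rewrite Enb; exact (eigenvalues_agree N eb c _ _ Mc Nb Hbc)).
  assert (Ena : alpha = na) by (rewrite <- Emc; exact (eigenvalues_agree N ea c _ _ Mc Na Hac)).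
  assert (Emb : mb = alpha) by (rewrite Ena; exact (eigenvalues_agree N ea b _ _ Mb Na Hab)).
  subst mb mc na nb nc; exists alpha; repeat split; auto.
Qed.

(** [N d - alpha d] lies on the three planes, hence is a multiple of [P]. *)
Lemma stabilizer_collineation alpha :
  alpha <> 0 ->
  (forall r, act_vec N a r = alpha * a r) -> (forall r, act_vec N b r = alpha * b r) ->
  (forall r, act_vec N c r = alpha * c r) -> (forall k, act_cov ea N k = alpha * ea k) ->
  (forall k, act_cov eb N k = alpha * eb k) -> (forall k, act_cov ec N k = alpha * ec k) ->
  exists g, forall r k, N r k = alpha * central_collineation pi P g r k.
Proof.
  intros Hal Ma Mb Mc Na Nb Nc.
  set (w := fun r => act_vec N d r - alpha * d r).
  assert (Wplanes : forall e, (forall k, act_cov e N k = alpha * e k) -> ev e w = 0).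
  { intros e He; unfold w.
    transitivity (ev e (act_vec N d) - alpha * ev e d); [unfold ev, sum4; ring|].
    rewrite ev_act_vec, (ev_ext _ _ _ _ He (fun k => eq_refl)); unfold ev, sum4; ring. }
  pose proof (vanish_three_planes_proportional w (Wplanes ea Na) (Wplanes eb Nb) (Wplanes ec Nc)) as WP.
  exists (det4 a b c w / (det4 a b c d * ev pi P * alpha)).
  apply (mat_eq_of_act N); intros x r.
  rewrite (act_vec_scal_mat (fun r k => alpha * central_collineation pi P _ r k)
             (central_collineation pi P _) alpha) by reflexivity.
  rewrite (act_vec_fixing_face N a b c d alpha x r HD Ma Mb Mc).
  change (act_vec N d r - alpha * d r) with (w r); rewrite WP, act_vec_central_collineation.
  replace (ev pi x) with (det4 a b c x) by (symmetry; apply ev_wedge3_l).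
  pose proof plane_point_nonzero; field; auto.
Qed.

Lemma stabilizer_collineation_admissible alpha g :
  (forall r k, N r k = alpha * central_collineation pi P g r k) -> 1 + g * ev pi P <> 0.
Proof.
  intros HN Z; apply plane_point_nonzero.
  assert (NP : forall r, act_vec N P r = 0).
  { intro r; rewrite (act_vec_scal_mat _ _ alpha P r HN), act_vec_central_collineation.
    replace (P r + g * ev pi P * P r) with ((1 + g * ev pi P) * P r) by ring; rewrite Z; ring. }
  assert (P0 : forall r, P r = 0).
  { intro r; rewrite <- (inverse_pair_vec N N' HI P r); unfold act_vec at 1, sum4.
    rewrite !NP; ring. }
  unfold ev, sum4; rewrite !P0; ring.
Qed.

Lemma stabilizer_three_flags :
  ev ea b <> 0 -> ev ea c <> 0 -> ev eb a <> 0 -> ev eb c <> 0 -> ev ec a <> 0 ->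
  proj_eq a (act_vec N a) -> proj_eq b (act_vec N b) -> proj_eq c (act_vec N c) ->
  proj_eq ea (act_cov ea N') -> proj_eq eb (act_cov eb N') -> proj_eq ec (act_cov ec N') ->
  exists alpha g, alpha <> 0 /\ 1 + g * ev pi P <> 0 /\
    (forall r k, N r k = alpha * central_collineation pi P g r k) /\
    (forall r k, N' r k = / alpha * central_collineation pi P (collineation_inv_param (ev pi P) g) r k).
Proof.
  intros Hab Hac Hba Hbc Hca Fa Fb Fc Fea Feb Fec.
  destruct stabilizer_common_eigenvalue as [alpha [Hal [Ma [Mb [Mc [Na [Nb Nc]]]]]]]; auto.
  destruct (stabilizer_collineation alpha) as [g HN]; auto.
  pose proof (stabilizer_collineation_admissible alpha g HN) as Hg.
  exists alpha, g; repeat split; auto.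
  apply (inverse_pair_unique N); auto.
  apply (inverse_pair_scale (central_collineation pi P g)); auto.
  now apply central_collineation_inverse.
Qed.

End Stabilizer.

End ThreeFlags.

Definition continuous_rep_at (f : tetrep * tetrep -> R) (x : tetrep * tetrep) : Prop :=
  forall e, 0 < e -> exists d, 0 < d /\ forall y, close d x y -> Rabs (f y - f x) < e.

Lemma close_mono d d' x y : d <= d' -> close d x y -> close d' x y.
Proof. intros Hd H m k; destruct (H m k) as [A [B [C D]]]; repeat split; lra. Qed.

Lemma close_sym d x y : close d x y -> close d y x.
Proof. intros H m k; destruct (H m k) as [A [B [C D]]]; repeat split; rewrite Rabs_minus_sym; assumption. Qed.

Lemma continuous_rep_coord x m k :
  continuous_rep_at (fun y => tV (fst y) m k) x /\ continuous_rep_at (fun y => tEta (fst y) m k) x /\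
  continuous_rep_at (fun y => tV (snd y) m k) x /\ continuous_rep_at (fun y => tEta (snd y) m k) x.
Proof.
  repeat split; intros e He; exists e; split; auto; intros y Hy;
    destruct (close_sym _ _ _ Hy m k) as [H1 [H2 [H3 H4]]]; assumption.
Qed.

Lemma continuous_rep_plus f g x :
  continuous_rep_at f x -> continuous_rep_at g x -> continuous_rep_at (fun y => f y + g y) x.
Proof.
  intros Hf Hg e He.
  destruct (Hf (e / 2)) as [d1 [D1 H1]]; [lra|]; destruct (Hg (e / 2)) as [d2 [D2 H2]]; [lra|].
  exists (Rmin d1 d2); split; [now apply Rmin_pos|]; intros y Hy.
  specialize (H1 y (close_mono _ _ _ _ (Rmin_l d1 d2) Hy)).
  specialize (H2 y (close_mono _ _ _ _ (Rmin_r d1 d2) Hy)).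
  replace (f y + g y - (f x + g x)) with ((f y - f x) + (g y - g x)) by ring.
  eapply Rle_lt_trans; [apply Rabs_triang | lra].
Qed.

Lemma continuous_rep_opp f x : continuous_rep_at f x -> continuous_rep_at (fun y => - f y) x.
Proof.
  intros Hf e He; destruct (Hf e He) as [d [D H]]; exists d; split; auto; intros y Hy.
  replace (- f y - - f x) with (- (f y - f x)) by ring; rewrite Rabs_Ropp; auto.
Qed.

Lemma continuous_rep_mult f g x :
  continuous_rep_at f x -> continuous_rep_at g x -> continuous_rep_at (fun y => f y * g y) x.
Proof.
  intros Hf Hg e He; set (K := 1 + Rabs (f x) + Rabs (g x)).
  pose proof (Rabs_pos (f x)); pose proof (Rabs_pos (g x)).
  assert (HK : 0 < K) by (unfold K; lra).
  set (r := Rmin 1 (e / K)).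
  assert (Hr : 0 < r) by (apply Rmin_pos; [lra | now apply Rdiv_lt_0_compat]).
  assert (HrK : r * K <= e).
  { apply Rmult_le_reg_r with (/ K); [now apply Rinv_0_lt_compat|].
    rewrite Rmult_assoc, Rinv_r, Rmult_1_r by lra; apply Rmin_r. }
  destruct (Hf r Hr) as [d1 [D1 H1]], (Hg r Hr) as [d2 [D2 H2]].
  exists (Rmin d1 d2); split; [now apply Rmin_pos|]; intros y Hy.
  specialize (H1 y (close_mono _ _ _ _ (Rmin_l d1 d2) Hy)).
  specialize (H2 y (close_mono _ _ _ _ (Rmin_r d1 d2) Hy)).
  replace (f y * g y - f x * g x) with ((f y - f x) * (g y - g x) + f x * (g y - g x) + g x * (f y - f x))
    by ring.
  eapply Rle_lt_trans; [apply Rabs_triang|].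
  eapply Rle_lt_trans; [apply Rplus_le_compat_r, Rabs_triang|]; rewrite !Rabs_mult.
  assert (r <= 1) by apply Rmin_l.
  pose proof (Rabs_pos (f y - f x)); pose proof (Rabs_pos (g y - g x)).
  assert (Rabs (f y - f x) * Rabs (g y - g x) <= Rabs (f y - f x) * r) by (apply Rmult_le_compat_l; lra).
  assert (Rabs (f x) * Rabs (g y - g x) <= Rabs (f x) * r) by (apply Rmult_le_compat_l; lra).
  assert (Rabs (g x) * Rabs (f y - f x) <= Rabs (g x) * r) by (apply Rmult_le_compat_l; lra).
  assert (Rabs (f y - f x) * r < 1 * r) by (apply Rmult_lt_compat_r; lra).
  unfold K in HrK; nra.
Qed.

Lemma continuous_rep_inv f x :
  continuous_rep_at f x -> f x <> 0 -> continuous_rep_at (fun y => / f y) x.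
Proof.
  intros Hf Hx e He; set (m := Rabs (f x)); assert (Hm : 0 < m) by now apply Rabs_pos_lt.
  set (r := Rmin (m / 2) (e * m * m / 2)).
  assert (Hr : 0 < r) by (apply Rmin_pos; [lra | apply Rdiv_lt_0_compat; [repeat apply Rmult_lt_0_compat|]; lra]).
  destruct (Hf r Hr) as [d [D H]]; exists d; split; auto; intros y Hy.
  specialize (H y Hy).
  assert (A1 : Rabs (f y - f x) < m / 2) by (eapply Rlt_le_trans; [exact H | apply Rmin_l]).
  assert (A2 : Rabs (f y - f x) < e * m * m / 2) by (eapply Rlt_le_trans; [exact H | apply Rmin_r]).
  assert (Fy : m / 2 < Rabs (f y)).
  { pose proof (Rabs_triang_inv (f x) (f y)) as T; rewrite Rabs_minus_sym in A1; fold m in T; lra. }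
  assert (fy0 : f y <> 0) by (intro Z; rewrite Z, Rabs_R0 in Fy; lra).
  replace (/ f y - / f x) with ((f x - f y) * / (f y * f x)) by (field; auto).
  rewrite Rabs_mult, Rabs_inv, Rabs_mult; fold m; rewrite Rabs_minus_sym.
  apply Rmult_lt_reg_r with (Rabs (f y) * m); [apply Rmult_lt_0_compat; lra|].
  rewrite Rmult_assoc, Rinv_l, Rmult_1_r by (apply Rgt_not_eq, Rmult_lt_0_compat; lra).
  assert (e * (m / 2 * m) < e * (Rabs (f y) * m))
    by (apply Rmult_lt_compat_l; auto; apply Rmult_lt_compat_r; lra).
  lra.
Qed.

Lemma continuous_rep_ev e v x :
  (forall k, continuous_rep_at (fun y => e y k) x) -> (forall k, continuous_rep_at (fun y => v y k) x) ->
  continuous_rep_at (fun y => ev (e y) (v y)) x.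
Proof.
  intros He Hv; unfold ev, sum4; repeat apply continuous_rep_plus; apply continuous_rep_mult; auto.
Qed.

Lemma continuous_rep_det4 a b c d x :
  (forall k, continuous_rep_at (fun y => a y k) x) -> (forall k, continuous_rep_at (fun y => b y k) x) ->
  (forall k, continuous_rep_at (fun y => c y k) x) -> (forall k, continuous_rep_at (fun y => d y k) x) ->
  continuous_rep_at (fun y => det4 (a y) (b y) (c y) (d y)) x.
Proof.
  intros Ha Hb Hc Hd; unfold det4, det3_234, Rminus.
  repeat first [apply continuous_rep_plus | apply continuous_rep_mult | apply continuous_rep_opp]; auto.
Qed.

Lemma continuous_rep_glue_num_den sigma tau x :
  continuous_rep_at (at_edge sigma tau glue_num) x /\ continuous_rep_at (at_edge sigma tau glue_den) x.
Proof.
  unfold at_edge, glue_num, glue_den; split;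
    repeat apply continuous_rep_mult; first [apply continuous_rep_ev | apply continuous_rep_det4];
    intro k; apply (continuous_rep_coord x _ k).
Qed.

Lemma continuous_rep_gluing_param sigma tau x :
  at_edge sigma tau glue_den x <> 0 ->
  continuous_rep_at (fun y => gluing_param sigma tau (fst y) (snd y)) x.
Proof.
  intros Hd; destruct (continuous_rep_glue_num_den sigma tau x) as [Cn Cd].
  exact (continuous_rep_mult _ _ x (continuous_rep_opp _ x Cn) (continuous_rep_inv _ x Cd Hd)).
Qed.

Lemma shared_flag_fixed A B A2 B2 F0 E0 F1 E1 m m' :
  inverse_pair A B -> trel A B F0 F1 -> trel A2 B2 E0 E1 ->
  flag_eq F0 m E0 m' -> flag_eq F1 m E1 m' ->
  proj_eq (tV F0 m) (act_vec (mat_mul B A2) (tV F0 m)) /\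
  proj_eq (tEta F0 m) (act_cov (tEta F0 m) (mat_mul B2 A)).
Proof.
  intros HI T1 T2 [G1 G2] [G3 G4]; destruct (T1 m) as [U1 U2], (T2 m') as [U3 U4].
  split; apply proj_eq_sym.
  - assert (X : proj_eq (act_vec A2 (tV F0 m)) (act_vec A (tV F0 m))).
    { eapply proj_eq_trans; [apply proj_eq_act_vec, G1|].
      eapply proj_eq_trans; [apply proj_eq_sym, U3|].
      eapply proj_eq_trans; [apply proj_eq_sym, G3 | exact U1]. }
    eapply proj_eq_ext; [| | exact (proj_eq_act_vec B _ _ X)];
      intro; [symmetry; apply act_vec_mul | now apply inverse_pair_vec].
  - assert (X : proj_eq (act_cov (tEta F0 m) B2) (act_cov (tEta F0 m) B)).
    { eapply proj_eq_trans; [apply proj_eq_act_cov, G2|].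
      eapply proj_eq_trans; [apply proj_eq_sym, U4|].
      eapply proj_eq_trans; [apply proj_eq_sym, G4 | exact U2]. }
    eapply proj_eq_ext; [| | exact (proj_eq_act_cov A _ _ X)];
      intro; [symmetry; apply act_cov_mul | now apply inverse_pair_cov].
Qed.

Lemma sum16_bound (T : I4 -> I4 -> R) m j :
  (forall a b, 0 <= T a b) -> T m j <= sum4 (fun a => sum4 (fun b => T a b)).
Proof.
  intros P; pose proof (P i1 i1); pose proof (P i1 i2); pose proof (P i1 i3); pose proof (P i1 i4);
  pose proof (P i2 i1); pose proof (P i2 i2); pose proof (P i2 i3); pose proof (P i2 i4);
  pose proof (P i3 i1); pose proof (P i3 i2); pose proof (P i3 i3); pose proof (P i3 i4);
  pose proof (P i4 i1); pose proof (P i4 i2); pose proof (P i4 i3); pose proof (P i4 i4).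
  unfold sum4; destruct m, j; lra.
Qed.

Section BasePair.
Variables (sigma tau : I4 -> I4) (F0 E0 : tetrep).
Hypotheses (Hs : is_edge_face sigma)
  (HF0 : is_tet_flags F0) (HE0 : is_tet_flags E0) (Hgl : glued sigma tau F0 E0).

Definition face_plane : vec := wedge3 (tV F0 (sigma i1)) (tV F0 (sigma i2)) (tV F0 (sigma i3)).
Definition face_point : vec := wedge3 (tEta F0 (sigma i1)) (tEta F0 (sigma i2)) (tEta F0 (sigma i3)).
Definition face_kappa : R := ev face_plane face_point.

Definition face_collineation (g : R) : mat := central_collineation face_plane face_point g.
Definition face_collineation_inv (g : R) : mat :=
  central_collineation face_plane face_point (collineation_inv_param face_kappa g).

Definition moved_pair (g : R) : tetrep * tetrep :=
  (F0, tact (face_collineation g) (face_collineation_inv g) E0).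

Lemma ev_face_nonzero a b : a <> b -> ev (tEta F0 (sigma a)) (tV F0 (sigma b)) <> 0.
Proof. intros; apply ev_nonzero; auto; apply inj_neq; auto; apply Hs. Qed.

Lemma face_products_nonzero :
  let ev' a b := ev (tEta F0 (sigma a)) (tV F0 (sigma b)) in
  ev' i1 i2 * ev' i2 i3 * ev' i3 i1 + ev' i1 i3 * ev' i2 i1 * ev' i3 i2 <> 0.
Proof.
  destruct (tet_flags_signs F0 HF0) as [s [Hsg Hsame]].
  apply cyclic_products_nonzero with (s (sigma i1)) (s (sigma i2)) (s (sigma i3)); auto;
    apply Hsame; apply inj_neq; try apply Hs; discriminate.
Qed.

Lemma face_kappa_nonzero : face_kappa <> 0.
Proof.
  unfold face_kappa, face_plane, face_point.
  rewrite ev_wedge3_wedge3 by now apply ev_diag.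
  exact face_products_nonzero.
Qed.

Lemma face_collineation_inverse g :
  1 + g * face_kappa <> 0 -> inverse_pair (face_collineation g) (face_collineation_inv g).
Proof. apply central_collineation_inverse. Qed.

Lemma flag_eq_moved g m m' :
  ev face_plane (tV F0 m) = 0 -> ev (tEta F0 m) face_point = 0 ->
  flag_eq F0 m E0 m' -> flag_eq F0 m (tact (face_collineation g) (face_collineation_inv g) E0) m'.
Proof.
  intros Hpi HP [HV HE]; split; unfold tact, face_collineation, face_collineation_inv; cbn [tV tEta fst snd].
  - eapply proj_eq_ext; [| | exact HV]; [reflexivity|].
    intro k; rewrite act_vec_central_collineation, (proj_eq_ev_zero_r _ _ _ (proj_eq_sym _ _ HV) Hpi); ring.
  - eapply proj_eq_ext; [| | exact HE]; [reflexivity|].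
    intro k; rewrite act_cov_central_collineation, (proj_eq_ev_zero_l _ _ _ (proj_eq_sym _ _ HE) HP); ring.
Qed.

Lemma FLrel_moved_pair g : 1 + g * face_kappa <> 0 -> FLrel sigma tau (moved_pair g).
Proof.
  intros Hg; destruct (wedge3_vanish (tV F0 (sigma i1)) (tV F0 (sigma i2)) (tV F0 (sigma i3)))
    as [P1 [P2 P3]].
  destruct (wedge3_vanish_r (tEta F0 (sigma i1)) (tEta F0 (sigma i2)) (tEta F0 (sigma i3)))
    as [Q1 [Q2 Q3]].
  destruct Hgl as [G1 [G2 G3]].
  split; [|split]; cbn [moved_pair fst snd]; auto.
  - apply is_tet_flags_tact; auto; now apply face_collineation_inverse.
  - split; [|split]; apply flag_eq_moved; auto.
Qed.

Lemma tet_equiv_moved_pair g : 1 + g * face_kappa <> 0 -> tet_equiv E0 (snd (moved_pair g)).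
Proof. intros Hg; apply tet_equiv_tact; now apply face_collineation_inverse. Qed.

Lemma gluing_param_moved_pair g :
  gluing_param sigma tau (fst (moved_pair g)) (snd (moved_pair g))
  = (1 + g * face_kappa) * gluing_param sigma tau F0 E0.
Proof.
  unfold gluing_param, moved_pair, tact; cbn [tV tEta fst snd].
  set (W := tV E0 (tau i4)).
  assert (HW : forall r, act_vec (face_collineation g) W r = 1 * W r + g * ev face_plane W * face_point r)
    by (intro r; unfold face_collineation; rewrite act_vec_central_collineation; ring).
  assert (E1 : det4 (tV F0 (sigma i1)) (tV F0 (sigma i2)) (tV F0 (sigma i3)) (act_vec (face_collineation g) W)
               = (1 + g * face_kappa) * det4 (tV F0 (sigma i1)) (tV F0 (sigma i2)) (tV F0 (sigma i3)) W).
  { rewrite <- !ev_wedge3_l; fold face_plane.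
    rewrite (ev_ext _ _ _ _ (fun k => eq_refl) HW), ev_lin; unfold face_kappa; ring. }
  assert (E2 : ev (tEta F0 (sigma i2)) (act_vec (face_collineation g) W) = ev (tEta F0 (sigma i2)) W).
  { rewrite (ev_ext _ _ _ _ (fun k => eq_refl) HW), ev_lin; unfold face_point.
    destruct (wedge3_vanish_r (tEta F0 (sigma i1)) (tEta F0 (sigma i2)) (tEta F0 (sigma i3)))
      as [_ [-> _]]; ring. }
  rewrite E1, E2; unfold Rdiv; ring.
Qed.

Lemma moved_pair_classification F1 E1 :
  FLrel sigma tau (F1, E1) -> tet_equiv F0 F1 -> tet_equiv E0 E1 ->
  exists g, 1 + g * face_kappa <> 0 /\ pair_equiv (F1, E1) (moved_pair g).
Proof.
  intros [_ [_ Hgl1]] [A [B [HI T1]]] [A2 [B2 [HI2 T2]]].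
  assert (HN : inverse_pair (mat_mul B A2) (mat_mul B2 A))
    by (apply inverse_pair_mul; auto using inverse_pair_sym).
  destruct Hgl as [G1 [G2 G3]], Hgl1 as [G1' [G2' G3']].
  destruct (shared_flag_fixed A B A2 B2 F0 E0 F1 E1 _ _ HI T1 T2 G1 G1') as [Fa Ga].
  destruct (shared_flag_fixed A B A2 B2 F0 E0 F1 E1 _ _ HI T1 T2 G2 G2') as [Fb Gb].
  destruct (shared_flag_fixed A B A2 B2 F0 E0 F1 E1 _ _ HI T1 T2 G3 G3') as [Fc Gc].
  destruct (stabilizer_three_flags (tV F0 (sigma i1)) (tV F0 (sigma i2)) (tV F0 (sigma i3)) (tV F0 (sigma i4))
              (tEta F0 (sigma i1)) (tEta F0 (sigma i2)) (tEta F0 (sigma i3)))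
    with (N := mat_mul B A2) (N' := mat_mul B2 A) as [alpha [g [Hal [Hg [NM NM']]]]];
    try (apply ev_diag; auto); try (apply ev_face_nonzero; discriminate); auto.
  { apply det4_perm_nonzero; try (apply det4_nonzero; auto);
      apply inj_neq; try apply Hs; discriminate. }
  { exact face_products_nonzero. }
  exists g; split; auto.
  apply pair_equiv_iff; exists B, A; split; [now apply inverse_pair_sym|].
  split; cbn [fst snd moved_pair]; [now apply trel_sym|].
  intro m; unfold tact; cbn [tV tEta fst snd].
  destruct (T2 m) as [[c [Hc U1]] [c' [Hc' U2]]]; split.
  - exists (/ (c * alpha)); split; [apply Rinv_neq_0_compat; apply Rmult_integral_contrapositive_currified; auto|].
    intro r; rewrite (act_vec_ext B B _ (fun k => c * act_vec A2 (tV E0 m) k)), act_vec_scal,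
      <- act_vec_mul, (act_vec_scal_mat (mat_mul B A2) (face_collineation g) alpha)
      by (intros; first [apply U1 | apply NM | reflexivity]).
    field; auto.
  - exists (alpha / c'); split; [unfold Rdiv; apply Rmult_integral_contrapositive_currified;
                                 auto; now apply Rinv_neq_0_compat|].
    intro k; rewrite (act_cov_ext _ (fun r => c' * act_cov (tEta E0 m) B2 r) A A), act_cov_scal,
      <- act_cov_mul, (act_cov_scal_mat (mat_mul B2 A) (face_collineation_inv g) (/ alpha))
      by (intros; first [apply U2 | apply NM' | reflexivity]).
    field; auto.
Qed.

Lemma moved_pair_close eps :
  0 < eps -> exists delta, 0 < delta /\ forall g g',
    Rabs (g' - g) < delta ->
    Rabs (collineation_inv_param face_kappa g' - collineation_inv_param face_kappa g) < delta ->
    close eps (moved_pair g) (moved_pair g').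
Proof.
  intros He.
  set (X := fun m j => ev face_plane (tV E0 m) * face_point j).
  set (Y := fun m j => ev (tEta E0 m) face_point * face_plane j).
  set (K := 1 + sum4 (fun m => sum4 (fun j => Rabs (X m j) + Rabs (Y m j)))).
  assert (Bound : forall m j, Rabs (X m j) + Rabs (Y m j) <= K - 1).
  { intros m j; unfold K; replace (1 + _ - 1) with (sum4 (fun m => sum4 (fun j => Rabs (X m j) + Rabs (Y m j))))
      by ring.
    apply sum16_bound with (T := fun m j => Rabs (X m j) + Rabs (Y m j)).
    intros a b; pose proof (Rabs_pos (X a b)); pose proof (Rabs_pos (Y a b)); lra. }
  assert (HK : 0 < K)
    by (pose proof (Bound i1 i1); pose proof (Rabs_pos (X i1 i1)); pose proof (Rabs_pos (Y i1 i1)); lra).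
  assert (Scale : forall u z, Rabs u < eps / K -> Rabs z <= K -> Rabs (u * z) < eps).
  { intros u z Hu Hz; rewrite Rabs_mult.
    apply Rle_lt_trans with (Rabs u * K); [apply Rmult_le_compat_l; auto; apply Rabs_pos|].
    apply Rmult_lt_reg_r with (/ K); [now apply Rinv_0_lt_compat|].
    rewrite Rmult_assoc, Rinv_r, Rmult_1_r by lra; exact Hu. }
  exists (eps / K); split; [now apply Rdiv_lt_0_compat|]; intros g g' Hg Hg' m j.
  unfold moved_pair, tact, face_collineation, face_collineation_inv; cbn [tV tEta fst snd].
  rewrite !Rminus_diag, !Rabs_R0, act_vec_central_collineation, act_vec_central_collineation,
    act_cov_central_collineation, act_cov_central_collineation.
  pose proof (Bound m j); pose proof (Rabs_pos (X m j)); pose proof (Rabs_pos (Y m j)).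
  repeat split; auto.
  - replace (_ - _) with ((g' - g) * - X m j) by (unfold X; ring).
    apply Scale; auto; rewrite Rabs_Ropp; lra.
  - replace (_ - _) with ((collineation_inv_param face_kappa g' - collineation_inv_param face_kappa g) * - Y m j)
      by (unfold Y; ring).
    apply Scale; auto; rewrite Rabs_Ropp; lra.
Qed.

End BasePair.

Definition class_of {sigma tau} (x : tetrep * tetrep) (Hx : FLrel sigma tau x) : FLq sigma tau :=
  exist _ (pair_equiv x) (ex_intro _ x (conj Hx eq_refl)).

Lemma FLq_eq sigma tau (q1 q2 : FLq sigma tau) : proj1_sig q1 = proj1_sig q2 -> q1 = q2.
Proof. destruct q1 as [P1 H1], q2 as [P2 H2]; simpl; intros ->; f_equal; apply proof_irrelevance. Qed.

Lemma rep_spec sigma tau (q : FLq sigma tau) : FLrel sigma tau (rep q) /\ proj1_sig q = pair_equiv (rep q).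
Proof. unfold rep; destruct (constructive_indefinite_description _ _) as [r Hr]; exact Hr. Qed.

Lemma g_bar_member sigma tau (q : FLq sigma tau) x :
  proj1_sig q x -> g_bar sigma tau q = gluing_param sigma tau (fst x) (snd x).
Proof.
  intros H; unfold g_bar; destruct (rep_spec sigma tau q) as [_ E].
  rewrite E in H; now apply gluing_param_invariant.
Qed.

Lemma g_bar_nonzero sigma tau (q : FLq sigma tau) :
  is_edge_face sigma -> is_edge_face tau -> g_bar sigma tau q <> 0.
Proof. intros Hs Ht; apply gluing_param_nonzero; auto; apply rep_spec. Qed.

Lemma g_bar_continuous sigma tau A B :
  is_edge_face sigma -> is_edge_face tau ->
  continuous_between (open_FLq sigma tau) A open_set B (g_bar sigma tau).
Proof.
  intros Hs Ht V HV; exists (fun q => V (g_bar sigma tau q)); split; [|intros; reflexivity].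
  exists (fun x => at_edge sigma tau glue_den x <> 0 /\ V (gluing_param sigma tau (fst x) (snd x))).
  split.
  - intros x [Hd Hv]; destruct (HV _ Hv) as [del Hdel].
    destruct (continuous_rep_glue_num_den sigma tau x) as [_ Cd].
    destruct (Cd (Rabs (at_edge sigma tau glue_den x))) as [d1 [D1 H1]]; [now apply Rabs_pos_lt|].
    destruct (continuous_rep_gluing_param sigma tau x Hd del (cond_pos del)) as [d2 [D2 H2]].
    exists (Rmin d1 d2); split; [now apply Rmin_pos|]; intros y Hy; split.
    + intro Z; specialize (H1 y (close_mono _ _ _ _ (Rmin_l d1 d2) Hy)).
      rewrite Z, Rminus_0_l, Rabs_Ropp in H1; lra.
    + apply Hdel, H2, (close_mono _ _ _ _ (Rmin_r d1 d2) Hy).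
  - intros x Hx; split.
    + intros [q [Vq Hqx]]; rewrite (g_bar_member _ _ q x Hqx) in Vq.
      split; auto; now apply glue_num_den_nonzero.
    + intros [_ Vx]; exists (class_of x Hx); split; [|apply pair_equiv_refl].
      rewrite (g_bar_member _ _ _ x); auto; apply pair_equiv_refl.
Qed.

Lemma continuity_pt_eps f y :
  continuity_pt f y -> forall e, 0 < e -> exists d, 0 < d /\ forall z, Rabs (z - y) < d -> Rabs (f z - f y) < e.
Proof.
  intros H e He; destruct (H e He) as [d [D Hd]]; exists d; split; auto; intros z Hz.
  destruct (Req_dec z y) as [-> | N]; [rewrite Rminus_diag, Rabs_R0; auto|].
  apply (Hd z); repeat split; auto.
Qed.

Section Homeomorphism.
Variables (sigma tau : I4 -> I4) (F E F0 E0 : tetrep).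
Hypotheses (Hs : is_edge_face sigma) (Ht : is_edge_face tau)
  (HF0 : is_tet_flags F0) (HE0 : is_tet_flags E0) (Hgl : glued sigma tau F0 E0)
  (TF : tet_equiv F F0) (TE : tet_equiv E E0).

Definition base_param : R := gluing_param sigma tau F0 E0.

Lemma base_param_nonzero : base_param <> 0.
Proof. exact (gluing_param_nonzero sigma tau (F0, E0) Hs Ht (conj HF0 (conj HE0 Hgl))). Qed.

(** The collineation parameter at which the gluing parameter equals [t]. *)
Definition collineation_param (t : R) : R := (t / base_param - 1) / face_kappa sigma F0.

Lemma collineation_param_spec t : 1 + collineation_param t * face_kappa sigma F0 = t / base_param.
Proof.
  pose proof base_param_nonzero; pose proof (face_kappa_nonzero sigma F0 Hs HF0).
  unfold collineation_param; field; auto.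
Qed.

Lemma collineation_param_admissible t : t <> 0 -> 1 + collineation_param t * face_kappa sigma F0 <> 0.
Proof.
  intros Ht0; rewrite collineation_param_spec; unfold Rdiv.
  apply Rmult_integral_contrapositive_currified; auto.
  apply Rinv_neq_0_compat, base_param_nonzero.
Qed.

(** [t = 0] is outside the target; it is sent to an arbitrary admissible value. *)
Definition nonzero_part (t : R) : R := if Req_EM_T t 0 then base_param else t.

Lemma nonzero_part_nonzero t : nonzero_part t <> 0.
Proof. unfold nonzero_part; destruct (Req_EM_T t 0); auto using base_param_nonzero. Qed.

Lemma nonzero_part_id t : t <> 0 -> nonzero_part t = t.
Proof. intros; unfold nonzero_part; destruct (Req_EM_T t 0); tauto. Qed.

Lemma FLrel_section t : FLrel sigma tau (moved_pair sigma F0 E0 (collineation_param (nonzero_part t))).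
Proof. apply FLrel_moved_pair; auto; apply collineation_param_admissible, nonzero_part_nonzero. Qed.

Definition section_point (t : R) : FLq sigma tau := class_of _ (FLrel_section t).

Lemma section_point_class t :
  t <> 0 -> proj1_sig (section_point t) = pair_equiv (moved_pair sigma F0 E0 (collineation_param t)).
Proof. intros; simpl; now rewrite nonzero_part_id. Qed.

Lemma g_bar_section t : t <> 0 -> g_bar sigma tau (section_point t) = t.
Proof.
  intros Ht0; rewrite (g_bar_member _ _ _ (moved_pair sigma F0 E0 (collineation_param t)))
    by (rewrite section_point_class; auto; apply pair_equiv_refl).
  rewrite gluing_param_moved_pair, collineation_param_spec; fold base_param.
  pose proof base_param_nonzero; field; auto.
Qed.

Lemma section_in_G t : Gset sigma tau F E (section_point t).
Proof.
  exists (moved_pair sigma F0 E0 (collineation_param (nonzero_part t))); split; [apply pair_equiv_refl|].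
  split; [exact TF|].
  apply tet_equiv_trans with E0; auto.
  apply tet_equiv_moved_pair, collineation_param_admissible, nonzero_part_nonzero.
Qed.

Lemma section_g_bar q : Gset sigma tau F E q -> section_point (g_bar sigma tau q) = q.
Proof.
  intros [x [Hq [T1 T2]]]; destruct (rep_spec _ _ q) as [Hr Er].
  assert (Prx : pair_equiv (rep q) x) by (rewrite <- Er; auto).
  assert (Eg : g_bar sigma tau q = gluing_param sigma tau (fst (rep q)) (snd (rep q))) by reflexivity.
  destruct (rep q) as [F1 E1].
  destruct (moved_pair_classification sigma tau F0 E0 Hs HF0 Hgl F1 E1) as [g [Hg Peq]]; auto.
  { apply tet_equiv_trans with F; [now apply tet_equiv_sym|].
    apply tet_equiv_trans with (fst x); auto; apply tet_equiv_sym, (pair_equiv_fst _ _ Prx). }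
  { apply tet_equiv_trans with E; [now apply tet_equiv_sym|].
    apply tet_equiv_trans with (snd x); auto; apply tet_equiv_sym, (pair_equiv_snd _ _ Prx). }
  rewrite Eg, (gluing_param_invariant sigma tau _ _ Peq), gluing_param_moved_pair; fold base_param.
  assert (Hgt : (1 + g * face_kappa sigma F0) * base_param <> 0)
    by (apply Rmult_integral_contrapositive_currified; auto using base_param_nonzero).
  apply FLq_eq; rewrite section_point_class, Er by exact Hgt.
  replace (collineation_param ((1 + g * face_kappa sigma F0) * base_param)) with g.
  - symmetry; now apply pair_equiv_classes.
  - pose proof base_param_nonzero; pose proof (face_kappa_nonzero sigma F0 Hs HF0).
    unfold collineation_param; field; auto.
Qed.

Lemma section_close y eps :
  y <> 0 -> 0 < eps -> exists delta, 0 < delta /\ forall z, Rabs (z - y) < delta ->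
    z <> 0 /\ close eps (moved_pair sigma F0 E0 (collineation_param y)) (moved_pair sigma F0 E0 (collineation_param z)).
Proof.
  intros Hy He; destruct (moved_pair_close sigma F0 E0 eps He) as [d [Hd Hclose]].
  assert (C1 : continuity_pt collineation_param y) by (unfold collineation_param; reg).
  assert (C2 : continuity_pt (fun z => collineation_inv_param (face_kappa sigma F0) (collineation_param z)) y).
  { pose proof (collineation_param_admissible y Hy); unfold collineation_inv_param, collineation_param in *; reg. }
  destruct (continuity_pt_eps _ _ C1 d Hd) as [d1 [D1 H1]].
  destruct (continuity_pt_eps _ _ C2 d Hd) as [d2 [D2 H2]].
  exists (Rmin (Rmin d1 d2) (Rabs y)); split.
  { repeat apply Rmin_pos; auto; now apply Rabs_pos_lt. }
  intros z Hz; pose proof (Rmin_l (Rmin d1 d2) (Rabs y)); pose proof (Rmin_r (Rmin d1 d2) (Rabs y)).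
  pose proof (Rmin_l d1 d2); pose proof (Rmin_r d1 d2); split.
  - intros ->; rewrite Rminus_0_l, Rabs_Ropp in Hz; lra.
  - apply Hclose; [apply H1 | apply H2]; lra.
Qed.

Lemma section_continuous :
  continuous_between open_set (fun t => t <> 0) (open_FLq sigma tau) (Gset sigma tau F E) section_point.
Proof.
  intros V [O [HO HOV]].
  exists (fun y => y <> 0 /\ O (moved_pair sigma F0 E0 (collineation_param y))); split.
  - intros y [Hy Oy]; destruct (HO _ Oy) as [eps [He Hc]].
    destruct (section_close y eps Hy He) as [d [Hd Hz]].
    exists (mkposreal d Hd); intros z Hdisc; destruct (Hz z Hdisc); split; auto.
  - intros y Hy.
    assert (Hx : FLrel sigma tau (moved_pair sigma F0 E0 (collineation_param y)))
      by (apply FLrel_moved_pair; auto; now apply collineation_param_admissible).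
    split.
    + intro Vh; split; auto; apply (HOV _ Hx); exists (section_point y); split; auto.
      rewrite section_point_class by auto; apply pair_equiv_refl.
    + intros [_ Oy]; apply (HOV _ Hx) in Oy; destruct Oy as [q [Vq Hq]].
      replace (section_point y) with q; auto.
      apply FLq_eq; rewrite section_point_class by auto.
      destruct (rep_spec _ _ q) as [_ Eq]; rewrite Eq in Hq |- *; now apply pair_equiv_classes.
Qed.

End Homeomorphism.

Theorem lemma3p2 (sigma tau : I4 -> I4) (F E : tetrep) :
  is_edge_face sigma -> is_edge_face tau ->
  is_tet_flags F -> is_tet_flags E ->
  glueable_classes sigma tau F E ->
  homeomorphism_between (open_FLq sigma tau) (Gset sigma tau F E)
    open_set (fun t : R => t <> 0) (g_bar sigma tau).
Proof.
  intros Hs Ht _ _ [F0 [E0 [HF0 [HE0 [TF [TE Hgl]]]]]].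
  split; [intros q _; now apply g_bar_nonzero|].
  split; [now apply g_bar_continuous|].
  exists (section_point sigma tau F0 E0 Hs Ht HF0 HE0 Hgl).
  split; [intros t _; now apply section_in_G|].
  split; [intros q Hq; now apply (section_g_bar sigma tau F E)|].
  split; [intros t Ht0; now apply g_bar_section|].
  now apply section_continuous.
Qed.
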